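(* There exist a $16\times16$ bimagic square and a $25\times25$ pandiagonal bimagic square, each with pairwise distinct entries that are nonnegative integers whose decimal digits all lie in $\{0,1,2\}$, both having the same magic sum $S1=222222220$; moreover each of the sixteen $4\times4$ blocks of the first is a magic square with magic sum $55555555$, and each of the twenty-five $5\times5$ blocks of the second is a magic square with magic sum $44444444$.
   Context: A magic square of order $n$ is an $n\times n$ array of numbers in which the sums of the entries of each row, of each column and of each of the two principal diagonals all equal a common value $S1$. It is bimagic if in addition the sums of the squares of the entries of each row, each column and each of the two principal diagonals all equal a common value $S2$. It is pandiagonal if all broken diagonals also have sum $S1$. The $m\times m$ blocks of an $m^2\times m^2$ array are the subarrays with rows $mp+1,\dots,mp+m$ and columns $mq+1,\dots,mq+m$, $0\le p,q\le m-1$. *)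

From HB Require Import structures.
From mathcomp Require Import all_boot all_order all_algebra.
Set Implicit Arguments. Unset Strict Implicit. Unset Printing Implicit Defensive.

(* Squares of order n.+1 with natural-number entries, as matrices 'M[nat]_n.+1.
   Rows/columns indexed by 'I_n.+1 (0-based). *)

Definition row_sum n (A : 'M[nat]_n.+1) (i : 'I_n.+1) := (\sum_(j < n.+1) A i j)%N.
Definition col_sum n (A : 'M[nat]_n.+1) (j : 'I_n.+1) := (\sum_(i < n.+1) A i j)%N.
Definition diag_sum n (A : 'M[nat]_n.+1) := (\sum_(i < n.+1) A i i)%N.
Definition antidiag_sum n (A : 'M[nat]_n.+1) := (\sum_(i < n.+1) A i (rev_ord i))%N.

Definition magic_with n (A : 'M[nat]_n.+1) (S : nat) : Prop :=
  (forall i, row_sum A i = S) /\ (forall j, col_sum A j = S) /\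
  diag_sum A = S /\ antidiag_sum A = S.

Definition magic n (A : 'M[nat]_n.+1) : Prop := exists S, magic_with A S.

Definition bimagic_with n (A : 'M[nat]_n.+1) (S1 : nat) : Prop :=
  magic_with A S1 /\ exists S2, magic_with (map_mx (fun x => x ^ 2) A) S2.

Definition pandiagonal_with n (A : 'M[nat]_n.+1) (S1 : nat) : Prop :=
  forall k : 'I_n.+1,
    (\sum_(i < n.+1) A i (inord ((i + k) %% n.+1)))%N = S1 /\
    (\sum_(i < n.+1) A i (inord ((k + n.+1 - i) %% n.+1)))%N = S1.

Definition distinct_entries n (A : 'M[nat]_n.+1) : Prop :=
  injective (fun ij : 'I_n.+1 * 'I_n.+1 => A ij.1 ij.2).

Definition digits012 (x : nat) : Prop := forall k, (x %/ 10 ^ k) %% 10 <= 2.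

Definition entries_digits012 n (A : 'M[nat]_n.+1) : Prop :=
  forall i j, digits012 (A i j).

(* the (p,q) block of size m.+1 of a square of order n.+1 (used with
   n.+1 = (m.+1)^2): rows m.+1*p + i, columns m.+1*q + j *)
Definition block n m (A : 'M[nat]_n.+1) (p q : 'I_m.+1) : 'M[nat]_m.+1 :=
  \matrix_(i < m.+1, j < m.+1) A (inord (m.+1 * p + i)) (inord (m.+1 * q + j)).

(* Both squares are digit squares: the entry of cell (i, j) is the number
   \sum_(k < 8) 10^k * D k i j, whose k-th decimal digit D k i j lies in {0, 1, 2}.
   Line sums of such a square are controlled layer by layer: if each digit layer D k has
   sum c along a line, the entries sum to \sum_k 10^k c along it, and if each product
   layer D k * D l has sum P k l along it, the squared entries sum to
   \sum_(k,l) 10^k 10^l P k l.  Finally the digit layers of the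
   two squares are given explicitly -- linear forms over GF(4), resp. Z/5, in the cell
   coordinates (i/m, i%m, j/m, j%m), composed with two maps into {0,1,2} that jointly
   separate field elements -- the finitely many layer sums are checked by computation,
   and mainTheorem7 assembles these facts. *)

From HB Require Import structures.
From mathcomp Require Import all_boot all_order all_algebra.
From mathcomp Require Import zify.
From Stdlib Require DecimalNat.

Set Implicit Arguments.
Unset Strict Implicit.
Unset Printing Implicit Defensive.

Lemma all_iota_lt (p : pred nat) m : all p (iota 0 m) -> forall i, i < m -> p i.
Proof. by move=> /allP okp i im; apply: okp; rewrite mem_iota. Qed.

Lemma sum_ordE (f : nat -> nat) m : \sum_(i < m) f i = sumn [seq f i | i <- iota 0 m].
Proof. by rewrite sumnE big_map -(big_mkord xpredT) /index_iota subn0. Qed.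

Record line := Line { len : nat; lrow : nat -> nat; lcol : nat -> nat }.

Definition line_sum n (A : 'M[nat]_n.+1) (L : line) : nat :=
  \sum_(i < len L) A (inord (lrow L i)) (inord (lcol L i)).

Definition row_line n i := Line n.+1 (fun _ => i) id.
Definition col_line n j := Line n.+1 id (fun _ => j).
Definition diag_line n := Line n.+1 id id.
Definition antidiag_line n := Line n.+1 id (fun i => n - i).

Definition magic_lines n : seq line :=
  [:: diag_line n; antidiag_line n] ++
  [seq row_line n i | i <- iota 0 n.+1] ++ [seq col_line n j | j <- iota 0 n.+1].

Lemma magic_by_lines n (A : 'M[nat]_n.+1) S (ok : pred line) :
  all ok (magic_lines n) -> (forall L, ok L -> line_sum A L = S) -> magic_with A S.
Proof.
rewrite !all_cat !all_map => /and3P[/and3P[okd oka _] /all_iota_lt okr /all_iota_lt okc].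
move=> sumL; split; [move=> i | split; [move=> j | split]].
- rewrite -(sumL _ (okr i (ltn_ord i))); apply: eq_bigr => j _.
  by rewrite !inord_val.
- rewrite -(sumL _ (okc j (ltn_ord j))); apply: eq_bigr => i _.
  by rewrite !inord_val.
- by rewrite -(sumL _ okd); apply: eq_bigr => i _; rewrite inord_val.
- rewrite -(sumL _ oka); apply: eq_bigr => i _ /=; rewrite inord_val.
  congr (A i _); apply: val_inj; rewrite /= inordK ?subSS //.
  by rewrite ltnS leq_subr.
Qed.

Definition block_line m p q (L : line) :=
  Line (len L) (fun i => m.+1 * p + lrow L i) (fun i => m.+1 * q + lcol L i).

Definition inside m (L : line) :=
  all (fun i => (lrow L i < m.+1) && (lcol L i < m.+1)) (iota 0 (len L)).

Lemma block_line_sum n m (A : 'M[nat]_n.+1) (p q : 'I_m.+1) L :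
  inside m L -> line_sum (block A p q) L = line_sum A (block_line m p q L).
Proof.
move=> /all_iota_lt inL; apply: eq_bigr => i _; rewrite mxE.
by have /andP[ri ci] := inL i (ltn_ord i); rewrite (inordK ri) (inordK ci).
Qed.

Definition block_lines_ok m (ok : pred line) :=
  all (fun p => all (fun q =>
    all (fun L => inside m L && ok (block_line m p q L)) (magic_lines m))
    (iota 0 m.+1)) (iota 0 m.+1).

Lemma blocks_by_lines n m (A : 'M[nat]_n.+1) S (ok : pred line) :
  block_lines_ok m ok -> (forall L, ok L -> line_sum A L = S) ->
  forall p q : 'I_m.+1, magic_with (block A p q) S.
Proof.
move=> /all_iota_lt okB sumL p q.
have /all_iota_lt/(_ q (ltn_ord q)) okpq := okB p (ltn_ord p).
apply: (magic_by_lines okpq) => L /andP[inL okL].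
by rewrite block_line_sum // sumL.
Qed.

Definition broken_diag n t := Line n.+1 id (fun i => (i + t) %% n.+1).
Definition broken_antidiag n t := Line n.+1 id (fun i => (t + n.+1 - i) %% n.+1).
Definition pandiag_lines n : seq line :=
  [seq broken_diag n t | t <- iota 0 n.+1] ++ [seq broken_antidiag n t | t <- iota 0 n.+1].

Lemma pandiagonal_by_lines n (A : 'M[nat]_n.+1) S (ok : pred line) :
  all ok (pandiag_lines n) -> (forall L, ok L -> line_sum A L = S) ->
  pandiagonal_with A S.
Proof.
rewrite all_cat !all_map => /andP[/all_iota_lt okd /all_iota_lt oka] sumL t.
split.
- by rewrite -(sumL _ (okd t (ltn_ord t))); apply: eq_bigr => i _; rewrite inord_val.
- by rewrite -(sumL _ (oka t (ltn_ord t))); apply: eq_bigr => i _; rewrite inord_val.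
Qed.

Lemma decimal_digit w (d : nat -> nat) m : (forall k, d k < 10) ->
  (\sum_(k < w) 10 ^ k * d k) %/ 10 ^ m %% 10 = if m < w then d m else 0.
Proof.
elim: w d m => [|w IH] d m d_lt; first by rewrite big_ord0 div0n mod0n.
rewrite big_ord_recl expn0 mul1n.
under eq_bigr => k _ do rewrite expnS -mulnA.
rewrite -big_distrr /=; case: m => [|m].
  by rewrite expn0 divn1 mulnC addnC modnMDl modn_small.
rewrite expnS divnMA addnC mulnC divnMDl // (divn_small (d_lt 0)) addn0.
exact: (IH (fun k => d k.+1)).
Qed.

Section DigitSquares.
Variables (w n : nat) (D : nat -> nat -> nat -> nat).

Definition digit_entry i j := \sum_(k < w) 10 ^ k * D k i j.
Definition digit_square : 'M[nat]_n.+1 := \matrix_(i, j) digit_entry i j.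

(* The value of inord x in 'I_n.+1. *)
Definition clamp x := if x < n.+1 then x else 0.

Lemma val_inord x : nat_of_ord (@inord n x) = clamp x.
Proof. by rewrite val_insubd. Qed.

Definition line_digit k (L : line) i := D k (clamp (lrow L i)) (clamp (lcol L i)).
Definition layer_sum k L := sumn [seq line_digit k L i | i <- iota 0 (len L)].
Definition layer_product_sum k l L :=
  sumn [seq line_digit k L i * line_digit l L i | i <- iota 0 (len L)].

Definition layers_ok c L := all (fun k => layer_sum k L == c) (iota 0 w).
Definition products_ok (P : nat -> nat -> nat) L :=
  all (fun k => all (fun l => layer_product_sum k l L == P k l) (iota 0 w)) (iota 0 w).

Lemma line_sum_digit_square c L :
  layers_ok c L -> line_sum digit_square L = \sum_(k < w) 10 ^ k * c.
Proof.
move=> /all_iota_lt okL; rewrite /line_sum.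
under eq_bigr do rewrite mxE.
rewrite exchange_big; apply: eq_bigr => k _ /=; rewrite -big_distrr /=.
congr (_ * _); rewrite -(eqP (okL k (ltn_ord k))) /layer_sum -sum_ordE.
by apply: eq_bigr => i _; rewrite /line_digit -!val_inord.
Qed.

Lemma line_sqsum_digit_square P L :
  products_ok P L ->
  line_sum (map_mx (fun x => x ^ 2) digit_square) L =
  \sum_(k < w) \sum_(l < w) 10 ^ k * 10 ^ l * P k l.
Proof.
move=> /all_iota_lt okL; rewrite /line_sum.
under eq_bigr do rewrite !mxE -mulnn big_distrl /=.
under eq_bigr do under eq_bigr do rewrite big_distrr /=.
rewrite exchange_big; apply: eq_bigr => k _.
rewrite exchange_big; apply: eq_bigr => l _.
have /all_iota_lt/(_ l (ltn_ord l))/eqP <- := okL k (ltn_ord k).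
rewrite /layer_product_sum -sum_ordE big_distrr; apply: eq_bigr => i _ /=.
by rewrite mulnACA /line_digit -!val_inord.
Qed.

(* The products along the first row, which every other line has to reproduce. *)
Definition row0_products k l := layer_product_sum k l (row_line n 0).

Lemma digit_square_bimagic c :
  all (layers_ok c) (magic_lines n) -> all (products_ok row0_products) (magic_lines n) ->
  bimagic_with digit_square (\sum_(k < w) 10 ^ k * c).
Proof.
move=> okS okP; split; first exact: magic_by_lines okS (@line_sum_digit_square c).
exists (\sum_(k < w) \sum_(l < w) 10 ^ k * 10 ^ l * row0_products k l).
exact: magic_by_lines okP (@line_sqsum_digit_square row0_products).
Qed.

Hypothesis D_le2 : forall k i j, D k i j <= 2.

Lemma digit_entry_digit i j m :
  digit_entry i j %/ 10 ^ m %% 10 = if m < w then D m i j else 0.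
Proof.
have digit_lt k : D k i j < 10 by apply: leq_ltn_trans (D_le2 k i j) _.
exact: (@decimal_digit w (fun k => D k i j) m digit_lt).
Qed.

Lemma digit_square_digits012 : entries_digits012 digit_square.
Proof. by move=> i j m; rewrite mxE digit_entry_digit; case: ifP. Qed.

Definition digit_vector i j := [seq D k i j | k <- iota 0 w].
Definition digit_vectors_uniq :=
  uniq (mkseq (fun c => digit_vector (c %/ n.+1) (c %% n.+1)) (n.+1 * n.+1)).

Lemma digit_square_distinct : digit_vectors_uniq -> distinct_entries digit_square.
Proof.
move=> /mkseq_uniqP inj [i j] [i' j'] /=; rewrite !mxE => Eij.
have same_digits : digit_vector i j = digit_vector i' j'.
  apply/eq_in_map => k; rewrite mem_iota add0n => /andP[_ kw].
  by have := congr1 (fun x => x %/ 10 ^ k %% 10) Eij; rewrite /= !digit_entry_digit kw.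
have cell_lt (a b : 'I_n.+1) : a * n.+1 + b \in gtn (n.+1 * n.+1).
  by rewrite inE; have := ltn_ord a; have := ltn_ord b; nia.
have cellK (a b : 'I_n.+1) : ((a * n.+1 + b) %/ n.+1 = a) * ((a * n.+1 + b) %% n.+1 = b).
  by rewrite divnMDl // divn_small // addn0 modnMDl modn_small.
have cell_eq : i * n.+1 + j = i' * n.+1 + j'.
  by apply: inj; [exact: cell_lt | exact: cell_lt | rewrite /= !cellK].
by move: (cellK i j) (cellK i' j'); rewrite cell_eq => -[-> ->] [/val_inj-> /val_inj->].
Qed.

End DigitSquares.

Ltac decimal_lia :=
  cbv [Nat.of_num_uint]; rewrite ?DecimalNat.Unsigned.of_uint_alt;
  cbv [DecimalNat.Unsigned.of_lu Decimal.rev Decimal.revapp]; lia.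

Lemma decimal8_20 : \sum_(k < 8) 10 ^ k * 20 = 222222220.
Proof. rewrite !big_ord_recr big_ord0 /=; decimal_lia. Qed.
Lemma decimal8_5 : \sum_(k < 8) 10 ^ k * 5 = 55555555.
Proof. rewrite !big_ord_recr big_ord0 /=; decimal_lia. Qed.
Lemma decimal8_4 : \sum_(k < 8) 10 ^ k * 4 = 44444444.
Proof. rewrite !big_ord_recr big_ord0 /=; decimal_lia. Qed.

Lemma table_entry_le (T : seq (seq nat)) b a v :
  all (all (leq^~ b)) T -> nth 0 (nth [::] T a) v <= b.
Proof.
move=> /(all_nthP [::]) okT.
have [aT|aT] := ltnP a (size T); last by rewrite (nth_default _ aT) nth_nil.
have /(all_nthP 0) okr := okT a aT.
have [vr|vr] := ltnP v (size (nth [::] T a)); last by rewrite (nth_default _ vr).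
exact: okr.
Qed.

(* Two maps into {0, 1, 2}, indexed by the parity of the digit position, that jointly
   separate the elements of GF(4) = {0, 1, 2, 3}, resp. of Z/5. *)
Definition digit_maps4 := [:: [:: 0; 1; 2; 2]; [:: 1; 2; 0; 2]].
Definition digit_maps5 := [:: [:: 0; 0; 1; 1; 2]; [:: 0; 1; 0; 1; 2]].

(* GF(4) on {0, 1, 2, 3}: addition is bitwise xor, and 2 is a primitive element with
   2 * 2 = 3, 2 * 3 = 1. *)
Definition gf4_add x y :=
  nth 0 (nth [::] [:: [:: 0; 1; 2; 3]; [:: 1; 0; 3; 2]; [:: 2; 3; 0; 1]; [:: 3; 2; 1; 0]] x) y.
Definition gf4_mul x y :=
  nth 0 (nth [::] [:: [:: 0; 0; 0; 0]; [:: 0; 1; 2; 3]; [:: 0; 2; 3; 1]; [:: 0; 3; 1; 2]] x) y.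

(* The linear form with coefficients a at the cell (i, j) of the 16x16 square, seen as
   the point (i/4, i%4, j/4, j%4) of GF(4)^4. *)
Definition gf4_form (a : seq nat) i j :=
  gf4_add (gf4_add (gf4_mul (nth 0 a 0) (i %/ 4)) (gf4_mul (nth 0 a 1) (i %% 4)))
          (gf4_add (gf4_mul (nth 0 a 2) (j %/ 4)) (gf4_mul (nth 0 a 3) (j %% 4))).

Definition forms16 := [:: [:: 0; 1; 0; 2]; [:: 1; 1; 2; 2]; [:: 1; 2; 3; 1]; [:: 1; 3; 3; 2]].
Definition D16 k i j :=
  nth 0 (nth [::] digit_maps4 (k %% 2)) (gf4_form (nth [::] forms16 (k %/ 2)) i j).

Definition z5_form (a : seq nat) i j :=
  (nth 0 a 0 * (i %/ 5) + nth 0 a 1 * (i %% 5) + nth 0 a 2 * (j %/ 5)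
   + nth 0 a 3 * (j %% 5)) %% 5.
Definition forms25 := [:: [:: 1; 1; 2; 2]; [:: 1; 2; 2; 4]; [:: 1; 3; 3; 4]; [:: 1; 4; 3; 2]].
Definition D25 k i j :=
  nth 0 (nth [::] digit_maps5 (k %% 2)) (z5_form (nth [::] forms25 (k %/ 2)) i j).

Lemma D16_le2 k i j : D16 k i j <= 2. Proof. exact: table_entry_le. Qed.
Lemma D25_le2 k i j : D25 k i j <= 2. Proof. exact: table_entry_le. Qed.

Lemma square16_layers : all (layers_ok 8 15 D16 20) (magic_lines 15).
Proof. by vm_compute. Qed.
Lemma square16_products :
  all (products_ok 8 15 D16 (row0_products 15 D16)) (magic_lines 15).
Proof. by vm_compute. Qed.
Lemma square16_blocks : block_lines_ok 3 (layers_ok 8 15 D16 5).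
Proof. by vm_compute. Qed.
Lemma square16_uniq : digit_vectors_uniq 8 15 D16.
Proof. by vm_compute. Qed.

Lemma square25_layers : all (layers_ok 8 24 D25 20) (magic_lines 24).
Proof. by vm_compute. Qed.
Lemma square25_products :
  all (products_ok 8 24 D25 (row0_products 24 D25)) (magic_lines 24).
Proof. by vm_compute. Qed.
Lemma square25_pandiag : all (layers_ok 8 24 D25 20) (pandiag_lines 24).
Proof. by vm_compute. Qed.
Lemma square25_blocks : block_lines_ok 4 (layers_ok 8 24 D25 4).
Proof. by vm_compute. Qed.
Lemma square25_uniq : digit_vectors_uniq 8 24 D25.
Proof. by vm_compute. Qed.

Theorem mainTheorem7 :
  (exists A : 'M[nat]_16,
      bimagic_with A 222222220 /\
      distinct_entries A /\ entries_digits012 A /\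
      forall p q : 'I_4, magic_with (block A p q) 55555555)
  /\
  (exists B : 'M[nat]_25,
      bimagic_with B 222222220 /\
      pandiagonal_with B 222222220 /\
      distinct_entries B /\ entries_digits012 B /\
      forall p q : 'I_5, magic_with (block B p q) 44444444).
Proof.
split.
- exists (digit_square 8 15 D16); rewrite -decimal8_20 -decimal8_5.
  split; first exact: digit_square_bimagic square16_layers square16_products.
  split; first exact: digit_square_distinct D16_le2 square16_uniq.
  split; first exact: digit_square_digits012 _ _ D16_le2.
  exact: blocks_by_lines square16_blocks (@line_sum_digit_square _ _ _ 5).
- exists (digit_square 8 24 D25); rewrite -decimal8_20 -decimal8_4.
  split; first exact: digit_square_bimagic square25_layers square25_products.
  split; first exact: pandiagonal_by_lines square25_pandiag (@line_sum_digit_square _ _ _ 20).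
  split; first exact: digit_square_distinct D25_le2 square25_uniq.
  split; first exact: digit_square_digits012 _ _ D25_le2.
  exact: blocks_by_lines square25_blocks (@line_sum_digit_square _ _ _ 4).
Qed.
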